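(* There is a constant $C$ such that for all $\varepsilon\in(0,1]$, all $\Gamma\in\mathbb{R}$ and all smooth $\alpha:\mathbb{T}\to\mathbb{T}$ with $\eta:=\|\alpha'\|_\infty\le1$, setting $\gamma^0(r)=(0,\alpha(r),r)$ and $$\mathbf{v}^0(\mathbf{x})=\Gamma\int_{\mathbb{T}}\mathbf{k}^\varepsilon(\mathbf{x}-\gamma^0(r))\times\partial_r\gamma^0(r)\,dr,$$ one has $$\sup_{r\in\mathbb{T}}\big|v_1^0(\gamma^0(r))\big|\le C|\Gamma|\eta\varepsilon^{-1},\qquad \sup_{\mathbf{x}\in\mathbb{T}^3}\big|\partial_3\mathbf{v}^0(\mathbf{x})\big|\le C|\Gamma|\eta\varepsilon^{-2}.$$
   Context: $\mathbb{T}^3=\mathbb{R}^3/\mathbb{Z}^3$, identified with $[-\tfrac12,\tfrac12)^3$. The regularized Biot–Savart kernel is $\mathbf{k}^\varepsilon(\mathbf{x})=\frac{1}{4\pi}\frac{\mathbf{x}}{(|\mathbf{x}|^2+\varepsilon^2)^{3/2}}+\mathbf{h}^\varepsilon(\mathbf{x})$, where $\mathbf{h}^\varepsilon$ is a smooth correction making $\mathbf{k}^\varepsilon$ periodic, with $\mathbf{h}^\varepsilon$ and $\nabla\mathbf{h}^\varepsilon$ bounded uniformly in $\varepsilon$, and each component $k_i^\varepsilon$ is odd in $x_i$ and even in the other two coordinates. $\times$ is the vector cross product in $\mathbb{R}^3$. *)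

From Stdlib Require Import Reals Lra.
From Coquelicot Require Import Coquelicot.
Open Scope R_scope.

Definition V3 : Type := (R * R * R)%type.
Definition mk3 (a b c : R) : V3 := (a, b, c).
Definition cx1 (x : V3) : R := fst (fst x).
Definition cx2 (x : V3) : R := snd (fst x).
Definition cx3 (x : V3) : R := snd x.
(* component i, for i = 0,1,2 (i.e. x_1, x_2, x_3) *)
Definition vcomp (i : nat) (x : V3) : R :=
  match i with 0%nat => cx1 x | 1%nat => cx2 x | _ => cx3 x end.

Definition vadd (x y : V3) : V3 := mk3 (cx1 x + cx1 y) (cx2 x + cx2 y) (cx3 x + cx3 y).
Definition vsub (x y : V3) : V3 := mk3 (cx1 x - cx1 y) (cx2 x - cx2 y) (cx3 x - cx3 y).
Definition vscale (a : R) (x : V3) : V3 := mk3 (a * cx1 x) (a * cx2 x) (a * cx3 x).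
Definition cross (x y : V3) : V3 :=
  mk3 (cx2 x * cx3 y - cx3 x * cx2 y)
      (cx3 x * cx1 y - cx1 x * cx3 y)
      (cx1 x * cx2 y - cx2 x * cx1 y).
Definition norm3 (x : V3) : R := sqrt (cx1 x ^ 2 + cx2 x ^ 2 + cx3 x ^ 2).
Definition ebasis (i : nat) : V3 :=
  match i with 0%nat => mk3 1 0 0 | 1%nat => mk3 0 1 0 | _ => mk3 0 0 1 end.

(** Partial derivative d/dx_{i+1} of a scalar function on R^3. *)
Definition pd (i : nat) (f : V3 -> R) (x : V3) : R :=
  Derive (fun t => f (vadd x (vscale t (ebasis i)))) 0.
Definition pd_field (i : nat) (F : V3 -> V3) (x : V3) : V3 :=
  mk3 (pd i (fun y => cx1 (F y)) x) (pd i (fun y => cx2 (F y)) x)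
      (pd i (fun y => cx3 (F y)) x).

Fixpoint Ck (n : nat) (f : V3 -> R) : Prop :=
  match n with
  | 0%nat => forall x, continuous f x
  | S m => (forall x, continuous f x) /\
           forall i, (i < 3)%nat ->
             (forall x, ex_derive (fun t => f (vadd x (vscale t (ebasis i)))) 0)
             /\ Ck m (pd i f)
  end.
Definition smooth3 (f : V3 -> R) : Prop := forall n, Ck n f.
Definition smooth_field (F : V3 -> V3) : Prop :=
  forall i, (i < 3)%nat -> smooth3 (fun x => vcomp i (F x)).

Definition smooth1 (f : R -> R) : Prop := forall n x, ex_derive_n f n x.

Definition sup_abs (f : R -> R) : Rbar :=
  Lub_Rbar (fun y => exists r, y = Rabs (f r)).

(** Torus T^3 = R^3/Z^3 identified with [-1/2,1/2)^3. *)
Definition red (r : R) : R := r - IZR (Int_part (r + /2)).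
Definition red3 (x : V3) : V3 := mk3 (red (cx1 x)) (red (cx2 x)) (red (cx3 x)).
Definition in_cell (x : V3) : Prop :=
  -/2 <= cx1 x < /2 /\ -/2 <= cx2 x < /2 /\ -/2 <= cx3 x < /2.

(** Principal part of the regularized Biot-Savart kernel. *)
Definition K0 (eps : R) (x : V3) : V3 :=
  vscale (/ (4 * PI) * / (sqrt (norm3 x ^ 2 + eps ^ 2)) ^ 3) x.

(** k^eps on T^3 (as a Z^3-periodic function on R^3): on the fundamental
    cell [-1/2,1/2)^3 it equals K0 eps + h eps. *)
Definition kernel (h : R -> V3 -> V3) (eps : R) (x : V3) : V3 :=
  vadd (K0 eps (red3 x)) (h eps (red3 x)).

Definition refl (i : nat) (x : V3) : V3 :=
  match i with
  | 0%nat => mk3 (- cx1 x) (cx2 x) (cx3 x)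
  | 1%nat => mk3 (cx1 x) (- cx2 x) (cx3 x)
  | _ => mk3 (cx1 x) (cx2 x) (- cx3 x)
  end.
Definition kernel_sym (k : V3 -> V3) : Prop :=
  forall i j x, (i < 3)%nat -> (j < 3)%nat ->
    vcomp i (k (refl j x)) = (if Nat.eqb i j then - vcomp i (k x) else vcomp i (k x)).

Definition RInt3 (F : R -> V3) (a b : R) : V3 :=
  mk3 (RInt (fun r => cx1 (F r)) a b) (RInt (fun r => cx2 (F r)) a b)
      (RInt (fun r => cx3 (F r)) a b).

Definition gam0 (alpha : R -> R) (r : R) : V3 := mk3 0 (alpha r) r.
Definition dgam0 (alpha : R -> R) (r : R) : V3 := mk3 0 (Derive alpha r) 1.

Definition v0 (h : R -> V3 -> V3) (eps Gam : R) (alpha : R -> R) (x : V3) : V3 :=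
  vscale Gam (RInt3 (fun r => cross (kernel h eps (vsub x (gam0 alpha r)))
                                      (dgam0 alpha r)) 0 1).

From Stdlib Require Import Reals Lra Lia.
From Coquelicot Require Import Coquelicot.
Open Scope R_scope.

(** The tangent of the filament is [e_3 + alpha' e_2], so every contribution to [v^0] except
    the one from [e_3] carries a factor [alpha'], bounded by [eta].  On the filament that
    remaining term is [k_2(gamma(s) - gamma(r))], which vanishes when [alpha(s) = alpha(r)]
    because [k_2] is odd in [x_2]; the mean value theorem in [x_2] together with
    [|alpha(s) - alpha(r)| <= eta |s - r|] supplies the factor [eta] there too.  Each integrand
    is then bounded by a Lorentzian [A / ((s - r)^2 + eps^2)], whose integral is [A pi / eps].
    For [d_3 v^0], shifting the curve parameter turns the [x_3]-derivative of
    [int k(x - gamma(r)) dr] into [- int d_2 k(x - gamma(r)) alpha'(r) dr], and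
    [|grad k^eps| <~ eps^-1 / ((x_3 - r)^2 + eps^2)] costs one more power of [eps]. *)

Ltac vec_eq :=
  unfold vadd, vsub, vscale, ebasis, gam0, refl, red3, mk3, cx1, cx2, cx3; simpl;
  repeat (apply pair_equal_spec; split); try ring.

Lemma red_bounds r : -/2 <= red r < /2.
Proof. unfold red. destruct (base_Int_part (r + /2)); lra. Qed.

Lemma red_of_bounds r n : IZR n - /2 <= r < IZR n + /2 -> red r = r - IZR n.
Proof. intros H. unfold red. do 2 f_equal. symmetry. apply Int_part_spec. lra. Qed.

Lemma red_id r : -/2 <= r < /2 -> red r = r.
Proof. intros H. rewrite (red_of_bounds r 0); simpl; lra. Qed.

Lemma red_translate r r' n : r' = r + IZR n -> red r' = red r.
Proof.
  intros ->. unfold red at 2. destruct (base_Int_part (r + /2)).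
  rewrite (red_of_bounds _ (Int_part (r + /2) + n)); rewrite plus_IZR; [ring | lra].
Qed.

Lemma red_add_small r t : -/2 <= red r + t < /2 -> red (r + t) = red r + t.
Proof.
  change (red r) with (r - IZR (Int_part (r + /2))). intros H.
  rewrite (red_of_bounds _ (Int_part (r + /2))); [ring | lra].
Qed.

Lemma red3_add_line y j t : (j < 3)%nat -> 0 <= t -> red (vcomp j y) + t < /2 ->
  red3 (vadd y (vscale t (ebasis j))) = vadd (red3 y) (vscale t (ebasis j)).
Proof.
  intros Hj Ht Hr. pose proof (red_bounds (vcomp j y)).
  destruct j as [|[|[|j]]]; [| | | lia]; simpl in Hr, H;
  unfold vadd, vscale, ebasis, red3, mk3, cx1, cx2, cx3 in *; cbn [fst snd] in *;
  rewrite ?Rmult_0_r, ?Rplus_0_r, ?Rmult_1_r, red_add_small by lra; reflexivity.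
Qed.

Lemma in_cell_red3 y : in_cell (red3 y).
Proof. repeat split; apply red_bounds. Qed.

Lemma kernel_translate h eps y y' (n1 n2 n3 : Z) :
  cx1 y' = cx1 y + IZR n1 -> cx2 y' = cx2 y + IZR n2 -> cx3 y' = cx3 y + IZR n3 ->
  kernel h eps y' = kernel h eps y.
Proof.
  intros H1 H2 H3. unfold kernel, red3.
  now rewrite (red_translate _ _ _ H1), (red_translate _ _ _ H2), (red_translate _ _ _ H3).
Qed.

Lemma pd_kernel_translate h eps i j y y' (n1 n2 n3 : Z) :
  cx1 y' = cx1 y + IZR n1 -> cx2 y' = cx2 y + IZR n2 -> cx3 y' = cx3 y + IZR n3 ->
  pd j (fun z => vcomp i (kernel h eps z)) y' = pd j (fun z => vcomp i (kernel h eps z)) y.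
Proof.
  intros H1 H2 H3. unfold pd. apply Derive_ext. intros t.
  f_equal. apply (kernel_translate _ _ _ _ n1 n2 n3); unfold vadd, cx1, cx2, cx3 in *;
  simpl; [rewrite H1 | rewrite H2 | rewrite H3]; ring.
Qed.

Lemma vadd_vscale_0 p e : vadd p (vscale 0 e) = p.
Proof. destruct p as [[]]; vec_eq. Qed.

Lemma is_derive_line (f : V3 -> R) j :
  (forall y, ex_derive (fun t => f (vadd y (vscale t (ebasis j)))) 0) ->
  forall p s, is_derive (fun t => f (vadd p (vscale t (ebasis j)))) s
                (pd j f (vadd p (vscale s (ebasis j)))).
Proof.
  intros Hd p s. set (q := vadd p (vscale s (ebasis j))).
  apply (is_derive_ext (fun t => f (vadd q (vscale (t - s) (ebasis j))))).
  { intros t. f_equal. unfold q. destruct j as [|[|j]]; vec_eq. }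
  rewrite <- (scal_one (pd j f q)).
  apply (is_derive_comp (fun u => f (vadd q (vscale u (ebasis j)))) (fun t => t - s)).
  - replace (s - s) with 0 by ring. apply Derive_correct, Hd.
  - auto_derive; auto; ring.
Qed.

Lemma is_derive_unique_right (f g : R -> R) l1 l2 d : 0 < d ->
  is_derive f 0 l1 -> is_derive g 0 l2 -> (forall t, 0 <= t < d -> f t = g t) -> l1 = l2.
Proof.
  intros Hd H1 H2 Heq. apply is_derive_Reals in H1, H2.
  destruct (Req_dec l1 l2) as [E|NE]; [exact E | exfalso].
  set (e := Rabs (l1 - l2) / 2).
  assert (He : 0 < e) by (assert (0 < Rabs (l1 - l2)) by (apply Rabs_pos_lt; lra);
    unfold e; lra).
  destruct (H1 e He) as [[d1 p1] Hd1], (H2 e He) as [[d2 p2] Hd2]; simpl in Hd1, Hd2.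
  set (t := Rmin d (Rmin d1 d2) / 2).
  assert (Ht : 0 < t /\ t < d /\ t < d1 /\ t < d2).
  { pose proof (Rmin_l d (Rmin d1 d2)). pose proof (Rmin_r d (Rmin d1 d2)).
    pose proof (Rmin_l d1 d2). pose proof (Rmin_r d1 d2).
    pose proof (Rmin_pos d (Rmin d1 d2) Hd (Rmin_pos d1 d2 p1 p2)). unfold t; lra. }
  assert (A1 := Hd1 t ltac:(lra) ltac:(rewrite Rabs_right; lra)).
  assert (A2 := Hd2 t ltac:(lra) ltac:(rewrite Rabs_right; lra)).
  rewrite Rplus_0_l, (Heq t), (Heq 0) in A1 by lra. rewrite Rplus_0_l in A2.
  set (Q := (g t - g 0) / t) in *.
  assert (Rabs (l1 - l2) <= Rabs (Q - l2) + Rabs (Q - l1)).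
  { replace (l1 - l2) with ((Q - l2) - (Q - l1)) by ring.
    eapply Rle_trans; [apply Rabs_triang | rewrite Rabs_Ropp; lra]. }
  unfold e in *. lra.
Qed.

(** * Pointwise bounds on the kernel *)

Definition cBS : R := / (4 * PI).

Lemma cBS_pos : 0 < cBS.
Proof. apply Rinv_0_lt_compat. pose proof PI_RGT_0. lra. Qed.

Lemma cBS_PI : cBS * PI = /4.
Proof. unfold cBS. field. apply PI_neq0. Qed.

Lemma norm3_sq w : norm3 w ^ 2 = cx1 w ^ 2 + cx2 w ^ 2 + cx3 w ^ 2.
Proof. unfold norm3. rewrite pow2_sqrt; [reflexivity | nra]. Qed.

Lemma vcomp_sq_le i z : (i < 3)%nat -> vcomp i z ^ 2 <= norm3 z ^ 2.
Proof.
  intros Hi. rewrite norm3_sq. pose proof (pow2_ge_0 (cx1 z)).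
  pose proof (pow2_ge_0 (cx2 z)). pose proof (pow2_ge_0 (cx3 z)).
  destruct i as [|[|[|i]]]; simpl; lra || lia.
Qed.

Lemma abs_le_of_sq a S : 0 <= S -> a ^ 2 <= S ^ 2 -> Rabs a <= S.
Proof. intros HS H. apply Rabs_le. split; nra. Qed.

Lemma vcomp_abs_le i w : (i < 3)%nat -> Rabs (vcomp i w) <= norm3 w.
Proof. intros Hi. apply abs_le_of_sq; [apply sqrt_pos | now apply vcomp_sq_le]. Qed.

Lemma norm3_le_abs_sum a b c : norm3 (mk3 a b c) <= Rabs a + Rabs b + Rabs c.
Proof.
  unfold norm3. cbn [cx1 cx2 cx3 mk3 fst snd].
  pose proof (Rabs_pos a). pose proof (Rabs_pos b). pose proof (Rabs_pos c).
  rewrite <- (sqrt_pow2 (Rabs a + Rabs b + Rabs c)) by lra.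
  apply sqrt_le_1_alt. rewrite <- (pow2_abs a), <- (pow2_abs b), <- (pow2_abs c). nra.
Qed.

Lemma vcomp_vadd i a b : vcomp i (vadd a b) = vcomp i a + vcomp i b.
Proof. destruct i as [|[|i]]; reflexivity. Qed.

Lemma vcomp_vscale i k w : vcomp i (vscale k w) = k * vcomp i w.
Proof. destruct i as [|[|i]]; reflexivity. Qed.

Lemma div_sqrt_cube_le S q : 0 < q -> 0 <= S -> S ^ 2 <= q -> S / sqrt q ^ 3 <= / q.
Proof.
  intros Hq HS HSq. assert (Hs : 0 < sqrt q) by (apply sqrt_lt_R0; lra).
  assert (HSs : S <= sqrt q) by (rewrite <- (sqrt_pow2 S) by lra; now apply sqrt_le_1_alt).
  assert (E : sqrt q / sqrt q ^ 3 = / sqrt q ^ 2) by (field; lra).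
  rewrite pow2_sqrt in E by lra. rewrite <- E.
  apply Rmult_le_compat_r; [apply Rlt_le, Rinv_0_lt_compat, pow_lt |]; lra.
Qed.

Lemma K0_on_line eps i j z t : (i < 3)%nat -> (j < 3)%nat ->
  vcomp i (K0 eps (vadd z (vscale t (ebasis j)))) =
  cBS * / sqrt ((norm3 z ^ 2 + eps ^ 2) + 2 * t * vcomp j z + t ^ 2) ^ 3 *
    (vcomp i z + t * (if Nat.eqb i j then 1 else 0)).
Proof.
  intros Hi Hj. unfold K0. rewrite vcomp_vscale, !norm3_sq. unfold cBS.
  destruct i as [|[|[|i]]]; [| | | lia]; destruct j as [|[|[|j]]]; try lia;
  unfold vadd, vscale, ebasis, vcomp, mk3, cx1, cx2, cx3; cbn [fst snd Nat.eqb];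
  match goal with |- _ * / sqrt ?X ^ 3 * ?Y = _ * / sqrt ?X' ^ 3 * ?Y' =>
    replace X with X' by ring; replace Y with Y' by ring; reflexivity end.
Qed.

Lemma is_derive_K0_profile a b q zj : 0 < q ->
  is_derive (fun t => cBS * / sqrt (q + 2 * t * zj + t ^ 2) ^ 3 * (a + t * b)) 0
    (cBS * (b / sqrt q ^ 3 - 3 * a * zj / sqrt q ^ 5)).
Proof.
  intros Hq. assert (Hs : 0 < sqrt q) by (apply sqrt_lt_R0; lra).
  auto_derive; replace (q + 2 * 0 * zj + 0 * (0 * 1)) with q by ring.
  - repeat split; try lra. apply Rgt_not_eq. repeat apply Rmult_lt_0_compat; lra.
  - field. lra.
Qed.

Lemma is_derive_K0_line eps i j z : 0 < eps -> (i < 3)%nat -> (j < 3)%nat ->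
  let S := sqrt (norm3 z ^ 2 + eps ^ 2) in
  is_derive (fun t => vcomp i (K0 eps (vadd z (vscale t (ebasis j))))) 0
    (cBS * ((if Nat.eqb i j then 1 else 0) / S ^ 3 - 3 * vcomp i z * vcomp j z / S ^ 5)).
Proof.
  intros He Hi Hj S. eapply is_derive_ext.
  { intros t. symmetry. now apply K0_on_line. }
  apply is_derive_K0_profile.
  pose proof (pow2_ge_0 (norm3 z)). pose proof (pow_lt eps 2 He). lra.
Qed.

Lemma K0_derivative_abs_le a b zj S : 0 < S -> Rabs b <= 1 -> a ^ 2 <= S ^ 2 ->
  zj ^ 2 <= S ^ 2 -> Rabs (b / S ^ 3 - 3 * a * zj / S ^ 5) <= 4 / S ^ 3.
Proof.
  intros HS Hb Ha Hz. apply Rabs_le_between in Hb.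
  assert (Haz : - S ^ 2 <= a * zj <= S ^ 2) by (split; nra).
  assert (H5 : 0 < S ^ 5) by (apply pow_lt; lra).
  replace (b / S ^ 3 - 3 * a * zj / S ^ 5) with ((b * S ^ 2 - 3 * (a * zj)) / S ^ 5)
    by (field; lra).
  replace (4 / S ^ 3) with (4 * S ^ 2 / S ^ 5) by (field; lra).
  rewrite Rabs_div, (Rabs_right (S ^ 5)) by lra.
  apply Rmult_le_compat_r; [left; apply Rinv_0_lt_compat; lra |].
  apply Rabs_le. pose proof (pow2_ge_0 S). split; nra.
Qed.

Lemma smooth_field_continuous F i : smooth_field F -> (i < 3)%nat ->
  forall y, continuous (fun x => vcomp i (F x)) y.
Proof. intros HF Hi. exact (HF i Hi 0%nat). Qed.

Lemma smooth_field_ex_derive F i j : smooth_field F -> (i < 3)%nat -> (j < 3)%nat ->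
  forall y, ex_derive (fun t => vcomp i (F (vadd y (vscale t (ebasis j))))) 0.
Proof. intros HF Hi Hj. apply (proj2 (HF i Hi 1%nat) j Hj). Qed.

Lemma smooth_field_pd_continuous F i j : smooth_field F -> (i < 3)%nat -> (j < 3)%nat ->
  forall y, continuous (pd j (fun x => vcomp i (F x))) y.
Proof. intros HF Hi Hj. apply (proj2 (HF i Hi 1%nat) j Hj). Qed.

Section KernelBounds.

Variables (h : R -> V3 -> V3) (eps M : R).
Hypothesis eps_gt0 : 0 < eps.
Hypothesis h_bounded : forall x i j, in_cell x -> (i < 3)%nat -> (j < 3)%nat ->
  norm3 (h eps x) <= M /\ Rabs (pd j (fun y => vcomp i (h eps y)) x) <= M.

Let cell_weight_pos r : 0 < r ^ 2 + eps ^ 2.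
Proof. pose proof (pow2_ge_0 r). pose proof (pow_lt eps 2 eps_gt0). lra. Qed.

(* Keeping only [red y_3] of [red3 y] makes the bounds, along the filament, Lorentzians in the
   curve parameter. *)
Lemma kernel_abs_le i y : (i < 3)%nat ->
  Rabs (vcomp i (kernel h eps y)) <= cBS / (red (cx3 y) ^ 2 + eps ^ 2) + M.
Proof.
  intros Hi. unfold kernel. rewrite vcomp_vadd. set (z := red3 y).
  assert (Bh : Rabs (vcomp i (h eps z)) <= M).
  { eapply Rle_trans; [now apply vcomp_abs_le |].
    exact (proj1 (h_bounded z i 0%nat (in_cell_red3 y) Hi ltac:(lia))). }
  set (q := norm3 z ^ 2 + eps ^ 2).
  assert (Hq : 0 < q) by apply cell_weight_pos.
  assert (Hs : 0 < sqrt q) by (apply sqrt_lt_R0; lra).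
  assert (Hsq : sqrt q ^ 2 = q) by (apply pow2_sqrt; lra).
  assert (HzS : Rabs (vcomp i z) <= sqrt q).
  { apply abs_le_of_sq; [lra |]. rewrite Hsq. pose proof (vcomp_sq_le i z Hi). unfold q. nra. }
  assert (BK : Rabs (vcomp i (K0 eps z)) <= cBS / q).
  { unfold K0. rewrite vcomp_vscale. fold q. fold cBS.
    assert (Hc : 0 < cBS * / sqrt q ^ 3) by
      (apply Rmult_lt_0_compat; [apply cBS_pos | apply Rinv_0_lt_compat, pow_lt; lra]).
    rewrite Rabs_mult, Rabs_right by lra.
    assert (E : cBS * / sqrt q ^ 3 * sqrt q = cBS / sqrt q ^ 2) by (field; lra).
    rewrite Hsq in E. rewrite <- E.
    apply Rmult_le_compat_l; lra. }
  assert (Bq : cBS / q <= cBS / (red (cx3 y) ^ 2 + eps ^ 2)).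
  { apply Rmult_le_compat_l; [left; apply cBS_pos |].
    apply Rinv_le_contravar; [apply cell_weight_pos |].
    pose proof (vcomp_sq_le 2 z ltac:(lia)). unfold q. simpl in H. lra. }
  pose proof (Rabs_triang (vcomp i (K0 eps z)) (vcomp i (h eps z))). lra.
Qed.

Hypothesis h_smooth : smooth_field (h eps).
Hypothesis kernel_smooth : smooth_field (kernel h eps).

(* For small [t >= 0] the line through [y] stays in the cell around [red3 y], where the kernel
   is [K0 + h]. *)
Lemma pd_kernel_eq i j y : (i < 3)%nat -> (j < 3)%nat ->
  let z := red3 y in let S := sqrt (norm3 z ^ 2 + eps ^ 2) in
  pd j (fun x => vcomp i (kernel h eps x)) y =
  cBS * ((if Nat.eqb i j then 1 else 0) / S ^ 3 - 3 * vcomp i z * vcomp j z / S ^ 5)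
  + pd j (fun x => vcomp i (h eps x)) z.
Proof.
  intros Hi Hj z S. pose proof (red_bounds (vcomp j y)).
  apply (is_derive_unique_right
           (fun t => vcomp i (kernel h eps (vadd y (vscale t (ebasis j)))))
           (fun t => vcomp i (K0 eps (vadd z (vscale t (ebasis j))))
                     + vcomp i (h eps (vadd z (vscale t (ebasis j)))))
           _ _ (/2 - red (vcomp j y))); [lra | | |].
  - apply Derive_correct. now apply smooth_field_ex_derive.
  - apply (is_derive_plus (fun t => vcomp i (K0 eps (vadd z (vscale t (ebasis j)))))
                          (fun t => vcomp i (h eps (vadd z (vscale t (ebasis j)))))).
    + now apply is_derive_K0_line.
    + apply Derive_correct. now apply smooth_field_ex_derive.
  - intros t Ht. unfold kernel. rewrite red3_add_line by (auto; lra).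
    apply vcomp_vadd.
Qed.

Lemma kernel_pd_abs_le i j y : (i < 3)%nat -> (j < 3)%nat ->
  Rabs (pd j (fun x => vcomp i (kernel h eps x)) y)
    <= 4 * cBS / sqrt (red (cx3 y) ^ 2 + eps ^ 2) ^ 3 + M.
Proof.
  intros Hi Hj. rewrite pd_kernel_eq by auto.
  set (z := red3 y). set (S := sqrt (norm3 z ^ 2 + eps ^ 2)).
  assert (Hq : 0 < norm3 z ^ 2 + eps ^ 2) by apply cell_weight_pos.
  assert (HS : 0 < S) by (apply sqrt_lt_R0; lra).
  assert (HS2 : S ^ 2 = norm3 z ^ 2 + eps ^ 2) by (apply pow2_sqrt; lra).
  assert (BK : Rabs (cBS * ((if Nat.eqb i j then 1 else 0) / S ^ 3
                            - 3 * vcomp i z * vcomp j z / S ^ 5)) <= cBS * (4 / S ^ 3)).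
  { rewrite Rabs_mult, (Rabs_right cBS) by (left; apply cBS_pos).
    apply Rmult_le_compat_l; [left; apply cBS_pos |].
    pose proof (vcomp_sq_le i z Hi). pose proof (vcomp_sq_le j z Hj).
    apply K0_derivative_abs_le; auto; try nra.
    destruct (Nat.eqb i j); rewrite ?Rabs_R1, ?Rabs_R0; lra. }
  assert (Bh := proj2 (h_bounded z i j (in_cell_red3 y) Hi Hj)).
  assert (BS : / S ^ 3 <= / sqrt (red (cx3 y) ^ 2 + eps ^ 2) ^ 3).
  { assert (0 < sqrt (red (cx3 y) ^ 2 + eps ^ 2)) by apply sqrt_lt_R0, cell_weight_pos.
    apply Rinv_le_contravar; [apply pow_lt; lra |]. apply pow_incr. split; [lra |].
    apply sqrt_le_1_alt. pose proof (vcomp_sq_le 2 z ltac:(lia)). simpl in H0. lra. }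
  eapply Rle_trans; [apply Rabs_triang |]. pose proof cBS_pos.
  assert (cBS * (4 / S ^ 3) <= 4 * cBS / sqrt (red (cx3 y) ^ 2 + eps ^ 2) ^ 3).
  { unfold Rdiv. nra. }
  lra.
Qed.

(* [k_2] vanishes on [x_2 = 0] by parity, so the mean value theorem along [x_2] gains a
   factor [|x_2|]. *)
Lemma kernel_odd_component_abs_le a b : kernel_sym (kernel h eps) -> -/2 <= b < /2 ->
  Rabs (vcomp 1 (kernel h eps (mk3 0 a b)))
    <= Rabs a * (4 * cBS / sqrt (b ^ 2 + eps ^ 2) ^ 3 + M).
Proof.
  intros Hsym Hb. set (p := mk3 0 0 b).
  set (k2 := fun x => vcomp 1 (kernel h eps x)).
  set (phi := fun w => k2 (vadd p (vscale w (ebasis 1)))).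
  assert (Ea : phi a = k2 (mk3 0 a b)) by (unfold phi; f_equal; unfold p; vec_eq).
  assert (E0 : phi 0 = 0).
  { assert (Hs := Hsym 1%nat 1%nat p ltac:(lia) ltac:(lia)).
    replace (refl 1 p) with p in Hs by (unfold p; vec_eq). cbn [Nat.eqb] in Hs.
    unfold phi. replace (vadd p (vscale 0 (ebasis 1))) with p by (unfold p; vec_eq).
    unfold k2. lra. }
  assert (Hd : forall w, is_derive phi w (pd 1 k2 (vadd p (vscale w (ebasis 1))))).
  { intros w. apply is_derive_line, smooth_field_ex_derive; [exact kernel_smooth | lia..]. }
  destruct (MVT_gen phi 0 a (fun w => pd 1 k2 (vadd p (vscale w (ebasis 1)))))
    as [c [_ Hc]].
  - intros; apply Hd.
  - intros w _. apply continuity_pt_filterlim, (@ex_derive_continuous R_AbsRing R_NormedModule).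
    eexists; apply Hd.
  - change (Rabs (k2 (mk3 0 a b)) <= Rabs a * (4 * cBS / sqrt (b ^ 2 + eps ^ 2) ^ 3 + M)).
    rewrite <- Ea. replace (phi a) with (phi a - phi 0) by lra.
    rewrite Hc, Rabs_mult, Rmult_comm, Rminus_0_r.
    apply Rmult_le_compat_l; [apply Rabs_pos |].
    replace b with (red (cx3 (vadd p (vscale c (ebasis 1))))).
    + apply kernel_pd_abs_le; lia.
    + unfold p. vec_eq. rewrite Rmult_0_r, Rplus_0_r. now apply red_id.
Qed.

End KernelBounds.

(** * Integrals over a period *)

Lemma RInt_shift_period (g : R -> R) a : (forall x, continuous g x) ->
  (forall x, g (x + 1) = g x) -> RInt g a (a + 1) = RInt g 0 1.
Proof.
  intros Hc Hp.
  assert (Ex : forall u v, ex_RInt g u v)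
    by (intros; apply (@ex_RInt_continuous R_CompleteNormedModule); auto).
  rewrite <- (RInt_Chasles g a 1 (a + 1)), <- (RInt_Chasles g a 0 1) by auto.
  assert (E : RInt g 1 (a + 1) = RInt g 0 a).
  { assert (L := RInt_comp_lin g 1 1 0 a).
    replace (1 * 0 + 1) with 1 in L by ring. replace (1 * a + 1) with (a + 1) in L by ring.
    rewrite <- L by auto. apply RInt_ext. intros x _.
    replace (1 * x + 1) with (x + 1) by ring. rewrite Hp. exact (scal_one (g x)). }
  rewrite E, <- (opp_RInt_swap g 0 a) by auto.
  unfold plus, opp; simpl. ring.
Qed.

Lemma is_derive_lorentz_primitive A B c eps t : 0 < eps ->
  is_derive (fun s => - (A / eps) * atan ((c - s) / eps) + B * s) t
    (A / ((c - t) ^ 2 + eps ^ 2) + B).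
Proof.
  intros He.
  assert (Hq : 0 < (c - t) ^ 2 + eps ^ 2)
    by (pose proof (pow2_ge_0 (c - t)); pose proof (pow_lt eps 2 He); lra).
  assert (Hd : is_derive (fun s => atan ((c - s) / eps)) t
                 (- / eps * / (1 + ((c - t) / eps)²))).
  { apply (is_derive_comp atan (fun s => (c - s) / eps)).
    - apply is_derive_atan.
    - auto_derive; auto. field. lra. }
  replace (A / ((c - t) ^ 2 + eps ^ 2) + B)
    with (plus (scal (- (A / eps)) (- / eps * / (1 + ((c - t) / eps)²))) (scal B 1)).
  - apply (is_derive_plus (fun s => - (A / eps) * atan ((c - s) / eps)) (fun s => B * s)).
    + apply is_derive_scal, Hd.
    + apply is_derive_scal. auto_derive; auto.
  - unfold plus, scal; simpl; unfold mult; simpl. unfold Rsqr.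
    assert (0 < 1 + (c - t) / eps * ((c - t) / eps)) by
      (pose proof (Rle_0_sqr ((c - t) / eps)); unfold Rsqr in *; lra).
    field. repeat split; lra.
Qed.

(* A period of [g] centred at [c] sees the Lorentzian [A / ((c - t)^2 + eps^2)] at most once,
   and its integral over the whole line is [A * PI / eps]. *)
Lemma RInt_periodic_abs_le (g : R -> R) c eps A B : 0 < eps -> 0 <= A ->
  (forall x, continuous g x) -> (forall x, g (x + 1) = g x) ->
  (forall t, c - /2 < t < c + /2 -> Rabs (g t) <= A / ((c - t) ^ 2 + eps ^ 2) + B) ->
  Rabs (RInt g 0 1) <= A * PI / eps + B.
Proof.
  intros He HA Hc Hp Hb.
  rewrite <- (RInt_shift_period g (c - /2)) by auto.
  replace (c - /2 + 1) with (c + /2) by field.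
  set (F := fun s => - (A / eps) * atan ((c - s) / eps) + B * s).
  set (bd := fun s => A / ((c - s) ^ 2 + eps ^ 2) + B).
  assert (Hi : is_RInt bd (c - /2) (c + /2) (minus (F (c + /2)) (F (c - /2)))).
  { apply (@is_RInt_derive R_CompleteNormedModule).
    - intros; now apply is_derive_lorentz_primitive.
    - intros t _. apply (@ex_derive_continuous R_AbsRing R_NormedModule).
      unfold bd. auto_derive. pose proof (pow2_ge_0 (c - t)). pose proof (pow_lt eps 2 He).
      simpl in *. lra. }
  assert (Exg : ex_RInt g (c - /2) (c + /2))
    by (apply (@ex_RInt_continuous R_CompleteNormedModule); auto).
  eapply Rle_trans; [apply abs_RInt_le; [lra | exact Exg] |].
  eapply Rle_trans; [apply (RInt_le _ bd); [lra | | eexists; exact Hi |] |].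
  - apply (@ex_RInt_continuous R_CompleteNormedModule). intros.
    apply continuous_Rabs_comp; auto.
  - intros t Ht. apply Hb. lra.
  - rewrite (is_RInt_unique _ _ _ _ Hi). unfold F, minus, plus, opp; simpl.
    replace ((c - (c + /2)) / eps) with (- (/2 / eps)) by (field; lra).
    replace ((c - (c - /2)) / eps) with (/2 / eps) by (field; lra).
    rewrite atan_opp. pose proof (atan_bound (/2 / eps)).
    assert (0 <= A / eps) by (apply Rdiv_le_0_compat; lra).
    assert (A / eps * (2 * atan (/2 / eps)) <= A / eps * PI)
      by (apply Rmult_le_compat_l; lra).
    replace (A * PI / eps) with (A / eps * PI) by (field; lra).
    nra.
Qed.

Lemma is_derive_RInt_param_continuous (f df : R -> R -> R) u0 :
  (forall u t, is_derive (fun u => f u t) u (df u t)) ->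
  (forall t, continuous (fun z : R * R => df (fst z) (snd z)) (u0, t)) ->
  (forall u t, continuous (f u) t) ->
  is_derive (fun u => RInt (f u) 0 1) u0 (RInt (df u0) 0 1).
Proof.
  intros Hd Hc Hf.
  replace (RInt (df u0) 0 1) with (RInt (fun t => Derive (fun u => f u t) u0) 0 1)
    by (apply RInt_ext; intros; now apply is_derive_unique).
  apply (is_derive_RInt_param f 0 1 u0).
  - apply filter_forall. intros u t _. eexists. apply Hd.
  - intros t _. apply (continuity_2d_pt_ext df).
    + intros u v. symmetry. apply is_derive_unique, Hd.
    + apply continuity_2d_pt_filterlim, Hc.
  - apply filter_forall. intros u. apply (@ex_RInt_continuous R_CompleteNormedModule).
    intros; apply Hf.
Qed.

Lemma RInt_periodic_translate (g : R -> R) u : (forall x, continuous g x) ->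
  (forall x, g (x + 1) = g x) -> RInt g 0 1 = RInt (fun r => g (r + u)) 0 1.
Proof.
  intros Hc Hp. rewrite <- (RInt_shift_period g u) by auto.
  assert (L := RInt_comp_lin g 1 u 0 1).
  replace (1 * 0 + u) with u in L by ring. replace (1 * 1 + u) with (u + 1) in L by ring.
  rewrite <- L by (apply (@ex_RInt_continuous R_CompleteNormedModule); auto).
  apply RInt_ext. intros r _. replace (1 * r + u) with (r + u) by ring. exact (scal_one _).
Qed.

Lemma continuous_Rplus {U : UniformSpace} (f g : U -> R) x :
  continuous f x -> continuous g x -> continuous (fun y => f y + g y) x.
Proof. apply (@continuous_plus U R_AbsRing R_NormedModule). Qed.

Lemma continuous_Ropp {U : UniformSpace} (f : U -> R) x :
  continuous f x -> continuous (fun y => - f y) x.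
Proof. apply (@continuous_opp U R_AbsRing R_NormedModule). Qed.

Lemma continuous_Rminus {U : UniformSpace} (f g : U -> R) x :
  continuous f x -> continuous g x -> continuous (fun y => f y - g y) x.
Proof. intros. apply continuous_Rplus; auto. now apply continuous_Ropp. Qed.

Lemma continuous_Rmult {U : UniformSpace} (f g : U -> R) x :
  continuous f x -> continuous g x -> continuous (fun y => f y * g y) x.
Proof. apply (@continuous_mult U R_AbsRing). Qed.

Lemma continuous_Rconst {U : UniformSpace} (c : R) (x : U) : continuous (fun _ => c) x.
Proof. apply continuous_const. Qed.

Lemma continuous_Rid (x : R) : continuous (fun y : R => y) x.
Proof. apply continuous_id. Qed.

Lemma continuous_Rfst (x : R * R) : continuous (fun z : R * R => fst z) x.
Proof. destruct x. apply continuous_fst. Qed.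

Lemma continuous_Rsnd (x : R * R) : continuous (fun z : R * R => snd z) x.
Proof. destruct x. apply continuous_snd. Qed.

Lemma continuous_pair {U V W : UniformSpace} (a : U -> V) (b : U -> W) z :
  continuous a z -> continuous b z -> continuous (fun z => (a z, b z)) z.
Proof.
  intros Ha Hb. apply (continuous_comp_2 a b pair); auto.
  intros P [e HP]. exists e. intros [y1 y2] Hy. now apply HP.
Qed.

Lemma continuous_comp_V3 {U : UniformSpace} (F : V3 -> R) (G : U -> V3) z :
  (forall y, continuous F y) -> continuous (fun z => cx1 (G z)) z ->
  continuous (fun z => cx2 (G z)) z -> continuous (fun z => cx3 (G z)) z ->
  continuous (fun z => F (G z)) z.
Proof.
  intros HF H1 H2 H3.
  apply (continuous_ext (fun z => F (mk3 (cx1 (G z)) (cx2 (G z)) (cx3 (G z))))).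
  { intros y. now destruct (G y) as [[]]. }
  apply (continuous_comp (fun z => mk3 (cx1 (G z)) (cx2 (G z)) (cx3 (G z))) F); [| apply HF].
  unfold mk3. now repeat apply continuous_pair.
Qed.

(** * The velocity field of the filament *)

Lemma cross_dgam0 k alpha r :
  cross k (dgam0 alpha r) = mk3 (cx2 k - cx3 k * Derive alpha r) (- cx1 k) (cx1 k * Derive alpha r).
Proof. unfold cross, dgam0. vec_eq. Qed.

Lemma v0_eq h eps Gam alpha y :
  let k i r := vcomp i (kernel h eps (vsub y (gam0 alpha r))) in
  v0 h eps Gam alpha y =
  vscale Gam (mk3 (RInt (fun r => k 1%nat r - k 2%nat r * Derive alpha r) 0 1)
                  (RInt (fun r => - k 0%nat r) 0 1)
                  (RInt (fun r => k 0%nat r * Derive alpha r) 0 1)).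
Proof.
  intros k. unfold v0, RInt3. f_equal. unfold mk3.
  f_equal; [f_equal |]; apply RInt_ext; intros r _; now rewrite cross_dgam0.
Qed.

Definition pd_kernel_curve_integral h eps alpha (i j : nat) (x : V3) : R :=
  RInt (fun r => pd j (fun z => vcomp i (kernel h eps z)) (vsub x (gam0 alpha r))
                 * Derive alpha r) 0 1.

Section Filament.

Variables (h : R -> V3 -> V3) (eps M : R) (alpha : R -> R) (d : Z) (eta : R).
Hypothesis eps_gt0 : 0 < eps.
Hypothesis h_smooth : smooth_field (h eps).
Hypothesis kernel_smooth : smooth_field (kernel h eps).
Hypothesis h_bounded : forall x i j, in_cell x -> (i < 3)%nat -> (j < 3)%nat ->
  norm3 (h eps x) <= M /\ Rabs (pd j (fun y => vcomp i (h eps y)) x) <= M.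
Hypothesis alpha_smooth : smooth1 alpha.
Hypothesis alpha_periodic : forall r, alpha (r + 1) = alpha r + IZR d.
Hypothesis Derive_alpha_le : forall r, Rabs (Derive alpha r) <= eta.

Lemma is_derive_alpha r : is_derive alpha r (Derive alpha r).
Proof. apply Derive_correct, (alpha_smooth 1%nat). Qed.

Lemma continuous_alpha_comp {U : UniformSpace} (g : U -> R) z :
  continuous g z -> continuous (fun z => alpha (g z)) z.
Proof.
  intros Hg. apply (continuous_comp g alpha); auto.
  apply (@ex_derive_continuous R_AbsRing R_NormedModule), (alpha_smooth 1%nat).
Qed.

Lemma continuous_Derive_alpha_comp {U : UniformSpace} (g : U -> R) z :
  continuous g z -> continuous (fun z => Derive alpha (g z)) z.
Proof.
  intros Hg. apply (continuous_comp g (Derive alpha)); auto.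
  apply (@ex_derive_continuous R_AbsRing R_NormedModule), (alpha_smooth 2%nat).
Qed.

Ltac solve_continuous :=
  cbn [cx1 cx2 cx3 vadd vsub vscale gam0 mk3 ebasis fst snd];
  repeat match goal with
  | |- continuous (fun _ => _) _ => apply continuous_Rconst
  | |- continuous (fun z => z) _ => apply continuous_Rid
  | |- continuous (fun z => fst z) _ => apply continuous_Rfst
  | |- continuous (fun z => snd z) _ => apply continuous_Rsnd
  | |- continuous (fun z => @?f z + @?g z) _ => apply (continuous_Rplus f g)
  | |- continuous (fun z => @?f z - @?g z) _ => apply (continuous_Rminus f g)
  | |- continuous (fun z => @?f z * @?g z) _ => apply (continuous_Rmult f g)
  | |- continuous (fun z => - @?f z) _ => apply (continuous_Ropp f)
  | |- continuous (fun z => alpha (@?g z)) _ => apply (continuous_alpha_comp g)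
  | |- continuous (fun z => Derive alpha (@?g z)) _ => apply (continuous_Derive_alpha_comp g)
  | |- continuous alpha _ => apply (continuous_alpha_comp (fun z => z))
  | |- continuous (Derive alpha) _ => apply (continuous_Derive_alpha_comp (fun z => z))
  end.

Lemma continuous_sub_gam0 (F : V3 -> R) x r :
  (forall y, continuous F y) -> continuous (fun r => F (vsub x (gam0 alpha r))) r.
Proof. intros HF. apply continuous_comp_V3; [exact HF | ..]; solve_continuous. Qed.

Lemma continuous_kernel_sub_gam0 i x r : (i < 3)%nat ->
  continuous (fun r => vcomp i (kernel h eps (vsub x (gam0 alpha r)))) r.
Proof.
  intros Hi. apply (continuous_sub_gam0 (fun y => vcomp i (kernel h eps y))).
  now apply smooth_field_continuous.
Qed.

Lemma continuous_pd_kernel_sub_gam0 i j x r : (i < 3)%nat -> (j < 3)%nat ->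
  continuous (fun r => pd j (fun y => vcomp i (kernel h eps y)) (vsub x (gam0 alpha r))) r.
Proof.
  intros Hi Hj. apply (continuous_sub_gam0 (pd j (fun y => vcomp i (kernel h eps y)))).
  now apply smooth_field_pd_continuous.
Qed.

Lemma Derive_alpha_periodic r : Derive alpha (r + 1) = Derive alpha r.
Proof.
  assert (H1 : is_derive (fun s => alpha (s + 1)) r (Derive alpha (r + 1))).
  { rewrite <- (scal_one (Derive alpha (r + 1))).
    apply (is_derive_comp alpha (fun s => s + 1)); [apply is_derive_alpha |].
    auto_derive; auto; ring. }
  assert (H2 : is_derive (fun s => alpha (s + 1)) r (Derive alpha r)).
  { apply (is_derive_ext (fun s => alpha s + IZR d)); [intros; now rewrite alpha_periodic |].
    rewrite <- (Rplus_0_r (Derive alpha r)).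
    apply (is_derive_plus alpha (fun _ => IZR d)); [apply is_derive_alpha |].
    apply (@is_derive_const R_AbsRing R_NormedModule). }
  apply is_derive_unique in H1, H2. congruence.
Qed.

Lemma alpha_lipschitz s r : Rabs (alpha s - alpha r) <= eta * Rabs (s - r).
Proof.
  destruct (MVT_gen alpha r s (Derive alpha)) as [c [_ ->]].
  - intros; apply is_derive_alpha.
  - intros. apply continuity_pt_filterlim, continuous_alpha_comp, continuous_Rid.
  - rewrite Rabs_mult. apply Rmult_le_compat_r; [apply Rabs_pos | apply Derive_alpha_le].
Qed.

Hypothesis M_ge0 : 0 <= M.

Let eta_ge0 : 0 <= eta.
Proof. eapply Rle_trans; [apply Rabs_pos | apply (Derive_alpha_le 0)]. Qed.

Lemma kernel_sub_gam0_periodic x r :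
  kernel h eps (vsub x (gam0 alpha (r + 1))) = kernel h eps (vsub x (gam0 alpha r)).
Proof.
  apply (kernel_translate _ _ _ _ 0 (- d) (-1)); unfold vsub, gam0, mk3, cx1, cx2, cx3; simpl;
  rewrite ?alpha_periodic, ?opp_IZR; ring.
Qed.

Lemma vsub_gam0 s r : vsub (gam0 alpha s) (gam0 alpha r) = mk3 0 (alpha s - alpha r) (s - r).
Proof. vec_eq. Qed.

Lemma v0_cx1_integrand_abs_le s t : kernel_sym (kernel h eps) -> s - /2 < t < s + /2 ->
  let k i := vcomp i (kernel h eps (mk3 0 (alpha s - alpha t) (s - t))) in
  Rabs (k 1%nat - k 2%nat * Derive alpha t)
    <= 5 * cBS * eta / ((s - t) ^ 2 + eps ^ 2) + 2 * M * eta.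
Proof.
  intros Hsym Ht k. set (q := (s - t) ^ 2 + eps ^ 2). pose proof cBS_pos.
  assert (Hq : 0 < q) by (pose proof (pow2_ge_0 (s - t)); pose proof (pow_lt eps 2 eps_gt0);
    unfold q; lra).
  assert (B1 : Rabs (k 1%nat) <= eta * (4 * cBS / q + M)).
  { eapply Rle_trans; [apply kernel_odd_component_abs_le with (M := M); auto; lra |].
    fold q. pose proof (alpha_lipschitz s t).
    assert (Rabs (s - t) / sqrt q ^ 3 <= / q)
      by (apply div_sqrt_cube_le; [lra | apply Rabs_pos | rewrite pow2_abs; unfold q; nra]).
    assert (0 <= / sqrt q ^ 3) by (apply Rlt_le, Rinv_0_lt_compat, pow_lt, sqrt_lt_R0; lra).
    assert (Rabs (s - t) <= 1) by (apply Rabs_le; lra).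
    unfold Rdiv in *. pose proof (Rabs_pos (s - t)).
    assert (0 <= 4 * cBS * / sqrt q ^ 3 + M) by nra.
    apply (Rle_trans _ (eta * Rabs (s - t) * (4 * cBS * / sqrt q ^ 3 + M)));
      [now apply Rmult_le_compat_r |].
    rewrite Rmult_assoc. apply Rmult_le_compat_l; [lra | nra]. }
  assert (B2 : Rabs (k 2%nat) <= cBS / q + M).
  { eapply Rle_trans; [apply kernel_abs_le with (M := M); auto |].
    cbn [cx3 mk3 snd]. rewrite red_id by lra. fold q. lra. }
  pose proof (Derive_alpha_le t).
  eapply Rle_trans; [apply Rabs_triang |]. rewrite Rabs_Ropp, Rabs_mult. fold q.
  replace (5 * cBS * eta / q + 2 * M * eta) with (eta * (4 * cBS / q + M) + (cBS / q + M) * eta)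
    by (field; lra).
  apply Rplus_le_compat; [exact B1 | apply Rmult_le_compat; auto using Rabs_pos].
Qed.

Lemma v0_cx1_on_curve_abs_le Gam s : kernel_sym (kernel h eps) ->
  Rabs (cx1 (v0 h eps Gam alpha (gam0 alpha s))) <= Rabs Gam * (5 / 4 * eta / eps + 2 * M * eta).
Proof.
  intros Hsym. rewrite v0_eq. cbn [cx1 vscale mk3 fst]. rewrite Rabs_mult.
  apply Rmult_le_compat_l; [apply Rabs_pos |].
  replace (5 / 4 * eta / eps) with (5 * cBS * eta * PI / eps)
    by (replace (5 * cBS * eta * PI) with (5 * (cBS * PI) * eta) by ring;
        rewrite cBS_PI; field; lra).
  pose proof cBS_pos.
  apply (RInt_periodic_abs_le _ s); [lra | nra | | |].
  - intros r. apply continuous_Rminus; [| apply continuous_Rmult; [| solve_continuous]];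
      apply continuous_kernel_sub_gam0; lia.
  - intros r. now rewrite !kernel_sub_gam0_periodic, Derive_alpha_periodic.
  - intros t Ht. rewrite vsub_gam0. now apply v0_cx1_integrand_abs_le.
Qed.

Lemma pd_kernel_sub_gam0_periodic i j x r :
  pd j (fun z => vcomp i (kernel h eps z)) (vsub x (gam0 alpha (r + 1)))
  = pd j (fun z => vcomp i (kernel h eps z)) (vsub x (gam0 alpha r)).
Proof.
  apply (pd_kernel_translate _ _ _ _ _ _ 0 (- d) (-1)); unfold vsub, gam0, mk3, cx1, cx2, cx3;
  simpl; rewrite ?alpha_periodic, ?opp_IZR; ring.
Qed.

Lemma pd_kernel_sub_gam0_abs_le i j x t : (i < 3)%nat -> (j < 3)%nat ->
  cx3 x - /2 < t < cx3 x + /2 ->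
  Rabs (pd j (fun z => vcomp i (kernel h eps z)) (vsub x (gam0 alpha t)))
    <= 4 * cBS / eps / ((cx3 x - t) ^ 2 + eps ^ 2) + M.
Proof.
  intros Hi Hj Ht. set (q := (cx3 x - t) ^ 2 + eps ^ 2).
  assert (Hq : eps ^ 2 <= q) by (pose proof (pow2_ge_0 (cx3 x - t)); unfold q; lra).
  assert (Hq0 : 0 < q) by (pose proof (pow_lt eps 2 eps_gt0); lra).
  assert (0 < sqrt q) by (apply sqrt_lt_R0; lra).
  eapply Rle_trans; [apply kernel_pd_abs_le with (M := M); auto |].
  replace (red (cx3 (vsub x (gam0 alpha t)))) with (cx3 x - t)
    by (symmetry; apply red_id; simpl; lra). fold q.
  assert (eps / sqrt q ^ 3 <= / q) by (apply div_sqrt_cube_le; lra).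
  replace (4 * cBS / sqrt q ^ 3) with (4 * cBS / eps * (eps / sqrt q ^ 3)) by (field; lra).
  unfold Rdiv at 3. pose proof cBS_pos.
  apply Rplus_le_compat_r, Rmult_le_compat_l; [apply Rdiv_le_0_compat |]; lra.
Qed.

Lemma pd_kernel_curve_integral_abs_le i j x : (i < 3)%nat -> (j < 3)%nat ->
  Rabs (pd_kernel_curve_integral h eps alpha i j x) <= eta / eps ^ 2 + M * eta.
Proof.
  intros Hi Hj. pose proof cBS_pos.
  replace (eta / eps ^ 2) with (eta * 4 * cBS / eps * PI / eps)
    by (replace (eta * 4 * cBS / eps * PI) with (4 * (cBS * PI) * eta / eps) by (field; lra);
        rewrite cBS_PI; field; lra).
  apply (RInt_periodic_abs_le _ (cx3 x)); [lra | apply Rdiv_le_0_compat; nra | | |].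
  - intros r. apply continuous_Rmult; [now apply continuous_pd_kernel_sub_gam0 | solve_continuous].
  - intros r. now rewrite pd_kernel_sub_gam0_periodic, Derive_alpha_periodic.
  - intros t Ht. rewrite Rabs_mult.
    pose proof (Derive_alpha_le t). pose proof (Rabs_pos (Derive alpha t)).
    replace (eta * 4 * cBS / eps / ((cx3 x - t) ^ 2 + eps ^ 2) + M * eta)
      with ((4 * cBS / eps / ((cx3 x - t) ^ 2 + eps ^ 2) + M) * eta)
      by (field; pose proof (pow2_ge_0 (cx3 x - t)); pose proof (pow_lt eps 2 eps_gt0); lra).
    apply Rmult_le_compat; [apply Rabs_pos | apply Rabs_pos | | exact H0].
    now apply pd_kernel_sub_gam0_abs_le.
Qed.

Lemma vsub_vadd_line x u r :
  vsub (vadd x (vscale u (ebasis 2))) (gam0 alpha r)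
  = vadd (vsub x (gam0 alpha r)) (vscale u (ebasis 2)).
Proof. vec_eq. Qed.

Lemma is_derive_RInt_kernel_weighted i x : (i < 3)%nat ->
  is_derive (fun u => RInt (fun r => vcomp i (kernel h eps
                (vsub (vadd x (vscale u (ebasis 2))) (gam0 alpha r))) * Derive alpha r) 0 1) 0
    (pd_kernel_curve_integral h eps alpha i 2 x).
Proof.
  intros Hi. unfold pd_kernel_curve_integral. set (k := fun z => vcomp i (kernel h eps z)).
  set (P := fun u r => vadd (vsub x (gam0 alpha r)) (vscale u (ebasis 2))).
  apply (is_derive_ext (fun u => RInt (fun r => k (P u r) * Derive alpha r) 0 1)).
  { intros u. apply RInt_ext. intros r _. unfold P. now rewrite vsub_vadd_line. }
  replace (RInt (fun r => pd 2 k (vsub x (gam0 alpha r)) * Derive alpha r) 0 1)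
    with (RInt (fun r => pd 2 k (P 0 r) * Derive alpha r) 0 1)
    by (apply RInt_ext; intros r _; unfold P; now rewrite vadd_vscale_0).
  apply (is_derive_RInt_param_continuous (fun u r => k (P u r) * Derive alpha r)
           (fun u r => pd 2 k (P u r) * Derive alpha r)).
  - intros u r. apply (@is_derive_scal_l R_AbsRing R_NormedModule (fun u => k (P u r))).
    apply is_derive_line, smooth_field_ex_derive; auto.
  - intros t. apply continuous_Rmult.
    + apply continuous_comp_V3; [apply smooth_field_pd_continuous; auto | ..];
        unfold P; solve_continuous.
    + solve_continuous.
  - intros u t. apply continuous_Rmult; [| solve_continuous].
    apply continuous_comp_V3; [apply smooth_field_continuous; auto | ..];
      unfold P; solve_continuous.
Qed.

(* Translating the parameter by [u] turns the vertical shift of [x] into a shift of [alpha]'s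
   argument, so the derivative falls on [alpha] and produces the factor [Derive alpha]. *)
Lemma is_derive_RInt_kernel_shift i x : (i < 3)%nat ->
  is_derive (fun u => RInt (fun r => vcomp i (kernel h eps
                (vsub (vadd x (vscale u (ebasis 2))) (gam0 alpha r)))) 0 1) 0
    (- pd_kernel_curve_integral h eps alpha i 1 x).
Proof.
  intros Hi. unfold pd_kernel_curve_integral. set (k := fun z => vcomp i (kernel h eps z)).
  set (Q := fun u r => vadd (vsub x (mk3 0 0 r)) (vscale (- alpha (r + u)) (ebasis 1))).
  assert (Hk : forall y, continuous k y) by (apply smooth_field_continuous; auto).
  apply (is_derive_ext (fun u => RInt (fun r => k (Q u r)) 0 1)).
  { intros u. symmetry. rewrite (RInt_periodic_translate _ u).
    - apply RInt_ext. intros r _. unfold k, Q. do 2 f_equal. vec_eq.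
    - intros r. now apply continuous_kernel_sub_gam0.
    - intros r. unfold k. now rewrite kernel_sub_gam0_periodic. }
  replace (- RInt (fun r => pd 1 k (vsub x (gam0 alpha r)) * Derive alpha r) 0 1)
    with (RInt (fun r => - Derive alpha (r + 0) * pd 1 k (Q 0 r)) 0 1).
  2: { rewrite <- (RInt_opp (V := R_CompleteNormedModule)).
       - apply RInt_ext. intros r _. rewrite Rplus_0_r.
         replace (Q 0 r) with (vsub x (gam0 alpha r)) by (unfold Q; rewrite Rplus_0_r; vec_eq).
         unfold opp; simpl; ring.
       - apply (@ex_RInt_continuous R_CompleteNormedModule). intros r _.
         apply continuous_Rmult; [| solve_continuous].
         apply continuous_pd_kernel_sub_gam0; lia. }
  apply (is_derive_RInt_param_continuous (fun u r => k (Q u r))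
           (fun u r => - Derive alpha (r + u) * pd 1 k (Q u r))).
  - intros u r. unfold Q.
    apply (is_derive_comp (fun w => k (vadd (vsub x (mk3 0 0 r)) (vscale w (ebasis 1))))
                          (fun u => - alpha (r + u))).
    + apply is_derive_line, smooth_field_ex_derive; auto; lia.
    + rewrite <- (Rmult_1_l (Derive alpha (r + u))).
      apply (is_derive_opp (fun u => alpha (r + u))).
      apply (is_derive_comp alpha (fun u => r + u)); [apply is_derive_alpha |].
      auto_derive; auto.
  - intros t. apply continuous_Rmult; [solve_continuous |].
    apply continuous_comp_V3; [apply smooth_field_pd_continuous; auto; lia | ..];
      unfold Q; solve_continuous.
  - intros u t. apply continuous_comp_V3; [exact Hk | ..]; unfold Q; solve_continuous.
Qed.

Lemma ex_RInt_kernel_sub_gam0 i y (w : R -> R) : (i < 3)%nat -> (forall r, continuous w r) ->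
  ex_RInt (fun r => vcomp i (kernel h eps (vsub y (gam0 alpha r))) * w r) 0 1.
Proof.
  intros Hi Hw. apply (@ex_RInt_continuous R_CompleteNormedModule). intros r _.
  apply continuous_Rmult; [| apply Hw].
  now apply continuous_kernel_sub_gam0.
Qed.

Lemma pd_v0_cx1 Gam x : pd 2 (fun y => cx1 (v0 h eps Gam alpha y)) x =
  Gam * (- pd_kernel_curve_integral h eps alpha 1 1 x - pd_kernel_curve_integral h eps alpha 2 2 x).
Proof.
  apply is_derive_unique.
  set (P := fun t r => vsub (vadd x (vscale t (ebasis 2))) (gam0 alpha r)).
  apply (is_derive_ext (fun t => Gam *
    (RInt (fun r => vcomp 1 (kernel h eps (P t r)) * 1) 0 1
     - RInt (fun r => vcomp 2 (kernel h eps (P t r)) * Derive alpha r) 0 1))).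
  unfold P.
  { intros t. rewrite v0_eq. cbn [cx1 vscale mk3 fst]. f_equal.
    rewrite <- (RInt_minus (V := R_CompleteNormedModule)) by
      (apply ex_RInt_kernel_sub_gam0; [lia | intros; solve_continuous]).
    apply RInt_ext. intros r _. unfold minus, plus, opp; simpl. ring. }
  apply is_derive_scal, (is_derive_minus (V := R_NormedModule)).
  - eapply is_derive_ext; [intros t; apply RInt_ext; intros r _; symmetry; apply Rmult_1_r |].
    apply is_derive_RInt_kernel_shift; lia.
  - apply is_derive_RInt_kernel_weighted; lia.
Qed.

Lemma pd_v0_cx2 Gam x : pd 2 (fun y => cx2 (v0 h eps Gam alpha y)) x =
  Gam * pd_kernel_curve_integral h eps alpha 0 1 x.
Proof.
  apply is_derive_unique.
  set (P := fun t r => vsub (vadd x (vscale t (ebasis 2))) (gam0 alpha r)).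
  apply (is_derive_ext (fun t => Gam * - RInt (fun r => vcomp 0 (kernel h eps (P t r)) * 1) 0 1)).
  unfold P.
  { intros t. rewrite v0_eq. cbn [cx2 vscale mk3 fst snd]. f_equal.
    rewrite <- (RInt_opp (V := R_CompleteNormedModule)) by
      (apply ex_RInt_kernel_sub_gam0; [lia | intros; solve_continuous]).
    apply RInt_ext. intros r _. unfold opp; simpl. ring. }
  rewrite <- (Ropp_involutive (pd_kernel_curve_integral h eps alpha 0 1 x)).
  apply is_derive_scal, (is_derive_opp (V := R_NormedModule)).
  eapply is_derive_ext; [intros t; apply RInt_ext; intros r _; symmetry; apply Rmult_1_r |].
  apply is_derive_RInt_kernel_shift; lia.
Qed.

Lemma pd_v0_cx3 Gam x : pd 2 (fun y => cx3 (v0 h eps Gam alpha y)) x =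
  Gam * pd_kernel_curve_integral h eps alpha 0 2 x.
Proof.
  apply is_derive_unique.
  set (P := fun t r => vsub (vadd x (vscale t (ebasis 2))) (gam0 alpha r)).
  apply (is_derive_ext (fun t => Gam * RInt (fun r => vcomp 0 (kernel h eps (P t r))
                                                      * Derive alpha r) 0 1)).
  unfold P.
  { intros t. now rewrite v0_eq. }
  apply is_derive_scal, is_derive_RInt_kernel_weighted; lia.
Qed.

Lemma pd_field_v0_norm_le Gam x :
  norm3 (pd_field 2 (v0 h eps Gam alpha) x) <= Rabs Gam * (4 * eta / eps ^ 2 + 4 * M * eta).
Proof.
  unfold pd_field. rewrite pd_v0_cx1, pd_v0_cx2, pd_v0_cx3.
  eapply Rle_trans; [apply norm3_le_abs_sum |]. rewrite !Rabs_mult, <- !Rmult_plus_distr_l.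
  apply Rmult_le_compat_l; [apply Rabs_pos |].
  pose proof (Rabs_triang (- pd_kernel_curve_integral h eps alpha 1 1 x)
                          (- pd_kernel_curve_integral h eps alpha 2 2 x)).
  rewrite !Rabs_Ropp in H.
  pose proof (pd_kernel_curve_integral_abs_le 1 1 x ltac:(lia) ltac:(lia)).
  pose proof (pd_kernel_curve_integral_abs_le 2 2 x ltac:(lia) ltac:(lia)).
  pose proof (pd_kernel_curve_integral_abs_le 0 1 x ltac:(lia) ltac:(lia)).
  pose proof (pd_kernel_curve_integral_abs_le 0 2 x ltac:(lia) ltac:(lia)).
  unfold Rminus. lra.
Qed.

End Filament.

Lemma sup_abs_le_1 (f : R -> R) : Rbar_le (sup_abs f) 1 ->
  0 <= real (sup_abs f) <= 1 /\ forall r, Rabs (f r) <= real (sup_abs f).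
Proof.
  unfold sup_abs. intros Hle.
  destruct (Lub_Rbar_correct (fun y => exists r, y = Rabs (f r))) as [Hub _].
  destruct (Lub_Rbar (fun y => exists r, y = Rabs (f r))) as [e | |]; simpl in Hle |- *.
  - assert (Hf : forall r, Rabs (f r) <= e) by (intros r; exact (Hub _ (ex_intro _ r eq_refl))).
    repeat split; auto. eapply Rle_trans; [apply Rabs_pos | apply (Hf 0)].
  - contradiction.
  - destruct (Hub _ (ex_intro _ 0 eq_refl)).
Qed.

Lemma bound_le_uniform G eta e M a b : 0 <= G -> 0 <= eta -> 0 < e <= 1 -> 0 <= M ->
  0 <= a <= 4 -> 0 <= b <= 4 -> G * (a * eta / e + b * M * eta) <= 4 * (1 + M) * G * eta / e.
Proof.
  intros HG Heta He HM Ha Hb.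
  assert (HX : eta <= eta / e).
  { apply Rmult_le_reg_r with e; [lra |]. unfold Rdiv. rewrite Rmult_assoc, Rinv_l by lra. nra. }
  unfold Rdiv in *. replace (4 * (1 + M) * G * eta * / e) with (G * (4 * (1 + M) * (eta * / e)))
    by ring.
  apply Rmult_le_compat_l; [lra |].
  assert (a * (eta * / e) <= 4 * (eta * / e)) by (apply Rmult_le_compat_r; lra).
  assert (b * M * eta <= 4 * M * (eta * / e)) by (apply Rmult_le_compat; nra).
  lra.
Qed.

Theorem lemma3 :
  forall h : R -> V3 -> V3,
    (* h^eps is a smooth correction *)
    (forall eps, 0 < eps <= 1 -> smooth_field (h eps)) ->
    (* making k^eps a smooth periodic kernel *)
    (forall eps, 0 < eps <= 1 -> smooth_field (kernel h eps)) ->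
    (* h^eps and grad h^eps bounded uniformly in eps *)
    (exists M : R, forall eps x i j, 0 < eps <= 1 -> in_cell x ->
        (i < 3)%nat -> (j < 3)%nat ->
        norm3 (h eps x) <= M /\ Rabs (pd j (fun y => vcomp i (h eps y)) x) <= M) ->
    (* parity of the components of k^eps *)
    (forall eps, 0 < eps <= 1 -> kernel_sym (kernel h eps)) ->
  exists C : R,
    forall (eps Gam : R) (alpha : R -> R),
      0 < eps <= 1 ->
      smooth1 alpha ->
      (* alpha : T -> T *)
      (exists d : Z, forall r, alpha (r + 1) = alpha r + IZR d) ->
      Rbar_le (sup_abs (Derive alpha)) 1 ->
      let eta := real (sup_abs (Derive alpha)) in
      (forall r, Rabs (cx1 (v0 h eps Gam alpha (gam0 alpha r)))
                   <= C * Rabs Gam * eta / eps) /\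
      (forall x, norm3 (pd_field 2 (v0 h eps Gam alpha) x)
                   <= C * Rabs Gam * eta / eps ^ 2).
Proof.
  intros h h_smooth kernel_smooth [M h_bounded] kernel_parity.
  assert (M_ge0 : 0 <= M).
  { destruct (h_bounded 1 (mk3 0 0 0) 0%nat 0%nat) as [H _]; try lra; try lia.
    - unfold in_cell, mk3, cx1, cx2, cx3; simpl; lra.
    - eapply Rle_trans; [apply sqrt_pos | exact H]. }
  exists (4 * (1 + M)).
  intros eps Gam alpha Heps alpha_smooth [d alpha_periodic] Hsup eta.
  destruct (sup_abs_le_1 _ Hsup) as [Heta Derive_alpha_le]. fold eta in Heta, Derive_alpha_le.
  assert (HepsM : forall x i j, in_cell x -> (i < 3)%nat -> (j < 3)%nat ->
    norm3 (h eps x) <= M /\ Rabs (pd j (fun y => vcomp i (h eps y)) x) <= M) by auto.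
  assert (Heps_pos : 0 < eps) by lra.
  assert (HG := Rabs_pos Gam).
  split.
  - intros r. eapply Rle_trans.
    { apply (v0_cx1_on_curve_abs_le h eps M alpha d eta); auto. }
    apply bound_le_uniform; lra.
  - intros x. eapply Rle_trans.
    { apply (pd_field_v0_norm_le h eps M alpha d eta); auto. }
    apply bound_le_uniform; try lra.
    split; [apply pow_lt; lra | simpl; nra].
Qed.
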